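(* Let $\mathbb{K}$ be a field, $n>1$, and let $a=[a_1,\dots,a_n]\in\mathbb{K}[s]^n$ be a non-zero row vector of degree $d=\max_i\deg(a_i)$. Let $h_1,\dots,h_l$ be a basis of the $\mathbb{K}$-vector space $\mathrm{syz}_d(a)$. Then $\mathrm{syz}(a)=\langle h_1,\dots,h_l\rangle_{\mathbb{K}[s]}$.
   Context: $\mathrm{syz}(a)=\{h\in\mathbb{K}[s]^n \mid a\,h=a_1h_1+\dots+a_nh_n=0\}$ (elements $h$ are column vectors), a $\mathbb{K}[s]$-module. The degree of a polynomial vector is the maximum of the degrees of its entries. $\mathrm{syz}_d(a)=\{h\in\mathbb{K}[s]^n \mid \deg(h)\le d,\ a\,h=0\}$, a finite-dimensional $\mathbb{K}$-vector space. $\langle\cdot\rangle_{\mathbb{K}[s]}$ denotes the $\mathbb{K}[s]$-module generated. *)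

From mathcomp Require Import all_boot all_order all_algebra.
Set Implicit Arguments. Unset Strict Implicit. Unset Printing Implicit Defensive.
Import GRing.Theory.
Local Open Scope ring_scope.

(* degree of a polynomial row/column vector, encoded via size = degree + 1:
   vsize v = max_i size (v_i); so deg v <= d  <->  vsize v <= d.+1 *)
Definition rvsize (K : fieldType) (n : nat) (a : 'rV[{poly K}]_n) : nat :=
  \max_(i < n) size (a ord0 i).
Definition cvsize (K : fieldType) (n : nat) (h : 'cV[{poly K}]_n) : nat :=
  \max_(i < n) size (h i ord0).

Definition rvdeg (K : fieldType) (n : nat) (a : 'rV[{poly K}]_n) : nat :=
  (rvsize a).-1.

Definition in_syz (K : fieldType) (n : nat) (a : 'rV[{poly K}]_n)
  (h : 'cV[{poly K}]_n) : Prop := a *m h = 0.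

Definition in_syz_d (K : fieldType) (n : nat) (a : 'rV[{poly K}]_n) (d : nat)
  (h : 'cV[{poly K}]_n) : Prop := (cvsize h <= d.+1)%N /\ a *m h = 0.

Definition is_K_basis_syz_d (K : fieldType) (n : nat) (a : 'rV[{poly K}]_n)
  (d : nat) (l : nat) (hs : 'I_l -> 'cV[{poly K}]_n) : Prop :=
  [/\ forall j, in_syz_d a d (hs j),
      (forall c : 'I_l -> K, \sum_(j < l) (c j)%:P *: hs j = 0 -> forall j, c j = 0) &
      (forall h, in_syz_d a d h ->
         exists c : 'I_l -> K, h = \sum_(j < l) (c j)%:P *: hs j)].

Definition in_Kmod_span (K : fieldType) (n : nat) (l : nat)
  (hs : 'I_l -> 'cV[{poly K}]_n) (h : 'cV[{poly K}]_n) : Prop :=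
  exists q : 'I_l -> {poly K}, h = \sum_(j < l) q j *: hs j.

From mathcomp Require Import all_boot all_order all_algebra.
Set Implicit Arguments. Unset Strict Implicit.
Import GRing.Theory.
Local Open Scope ring_scope.

(* Write [a = g b] with [g] a greatest common divisor of the entries of [a]
   and [b] unimodular, [u b = 1] (Bezout).  The Koszul syzygies
   [b_i e_j - b_j e_i] of [b] are syzygies of [a] of degree at most
   [deg b <= d], hence [K[s]]-combinations of the basis [h_1, ..., h_l]; and
   every syzygy [h] of [a] is one of [b], so that
   [h = (u b) h - (sum_i u_i e_i)(b h) = sum_(i,j) u_i h_j (b_i e_j - b_j e_i)]. *)

Lemma sumr_delta_mul (R : pzSemiRingType) n (F : 'I_n -> R) (i : 'I_n) :
  \sum_k (k == i)%:R * F k = F i.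
Proof.
rewrite (bigD1 i) //= eqxx mul1r big1 ?addr0 // => k /negbTE ->.
by rewrite mul0r.
Qed.

Section PolyBezout.
Variables (K : fieldType) (n : nat) (f : 'I_n -> {poly K}).

(* A non-zero combination [g] of the [f k] of minimal size divides every
   [f i]: otherwise [f i %% g] would be a smaller non-zero combination. *)
Lemma poly_combination_dvd : (exists i, f i != 0) ->
  exists u : 'I_n -> {poly K},
    \sum_k u k * f k != 0 /\ forall i, \sum_k u k * f k %| f i.
Proof.
suff comb_le m (u : 'I_n -> {poly K}) : (size (\sum_k u k * f k)%R <= m)%N ->
    \sum_k u k * f k != 0 -> exists v : 'I_n -> {poly K},
    \sum_k v k * f k != 0 /\ forall i, \sum_k v k * f k %| f i.
  by case=> i fi0; apply: (comb_le _ (fun k => (k == i)%:R)); rewrite sumr_delta_mul.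
elim: m u => [|m IHm] u; first by rewrite leqn0 size_poly_eq0 => /eqP ->; rewrite eqxx.
set g := \sum_k u k * f k => size_g g0.
have [/forallP g_dvd | /forallPn [i g_ndvd_fi]] := boolP [forall i, g %| f i].
  by exists u.
have mod_comb : \sum_k ((k == i)%:R - f i %/ g * u k) * f k = f i %% g.
  under eq_bigr => k _ do rewrite mulrBl -mulrA.
  rewrite sumrB -mulr_sumr sumr_delta_mul; apply/eqP.
  by rewrite subr_eq addrC -divp_eq.
apply: (IHm (fun k => (k == i)%:R - f i %/ g * u k)); rewrite mod_comb.
  by rewrite -ltnS (leq_trans _ size_g) // ltn_modp.
by apply: contra g_ndvd_fi => /eqP/modp_eq0P.
Qed.

Lemma poly_bezout_cofactors : (exists i, f i != 0) ->
  exists g (u : 'I_n -> {poly K}),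
    [/\ g != 0, forall i, f i = f i %/ g * g & \sum_k u k * (f k %/ g) = 1].
Proof.
case/poly_combination_dvd => u [g0 g_dvd]; set g := \sum_k _ in g0 g_dvd.
exists g, u; split=> [//|i|]; first by rewrite divpK.
apply: (mulIf g0); rewrite mul1r mulr_suml {2}/g.
by apply: eq_bigr => k _; rewrite -mulrA divpK.
Qed.

End PolyBezout.

Section Koszul.
Variables (R : comPzRingType) (n : nat) (b : 'I_n -> R).

Definition koszul_syz (j i : 'I_n) : 'cV[R]_n :=
  \col_k ((k == j)%:R * b i - (k == i)%:R * b j).

Lemma koszul_syzP j i : \row_k b k *m koszul_syz j i = 0.
Proof.
apply/matrixP => x y; rewrite !mxE.
under eq_bigr => k _ do rewrite !mxE mulrBr (mulrCA (b k)) (mulrCA (b k)).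
by rewrite sumrB !sumr_delta_mul [b j * _]mulrC subrr.
Qed.

Lemma koszul_decomposition (u : 'I_n -> R) (h : 'cV[R]_n) :
  \sum_k u k * b k = 1 -> \row_k b k *m h = 0 ->
  h = \sum_i \sum_j (u i * h j 0) *: koszul_syz j i.
Proof.
move=> ub1 bh0.
have bh : \sum_j h j 0 * b j = 0.
  transitivity ((\row_k b k *m h) 0 0); last by rewrite bh0 mxE.
  by rewrite mxE; apply: eq_bigr => j _; rewrite mxE mulrC.
apply/matrixP => k y; rewrite (ord1 y) summxE.
transitivity (\sum_i u i * b i * h k 0); first by rewrite -mulr_suml ub1 mul1r.
apply: eq_bigr => i _; rewrite summxE.
under eq_bigr => j _ do
  rewrite !mxE (eq_sym k j) mulrBr (mulrCA _ (_%:R)) (mulrCA _ (_%:R)).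
rewrite sumrB sumr_delta_mul -mulr_sumr.
under eq_bigr => j _ do rewrite -mulrA.
by rewrite -mulr_sumr bh !mulr0 subr0 mulrAC.
Qed.

End Koszul.

Lemma cvsize_koszul_syz (K : fieldType) n (b : 'I_n -> {poly K}) d j i :
  (forall k, size (b k) <= d)%N -> (cvsize (koszul_syz b j i) <= d)%N.
Proof.
move=> size_b; apply/bigmax_leqP => k _; rewrite mxE.
apply: leq_trans (size_polyD _ _) _; rewrite size_polyN geq_max.
by apply/andP; split; case: eqP => _; rewrite ?mul1r ?mul0r ?size_poly0.
Qed.

Lemma rV_neq0_entry (R : nmodType) n (a : 'rV[R]_n) :
  a != 0 -> exists i, a ord0 i != 0.
Proof.
move=> a_neq0; apply/existsP; apply: contraNT a_neq0 => /existsPn all0.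
apply/eqP/matrixP => x y.
by rewrite (ord1 x) mxE; apply/eqP/negPn/all0.
Qed.

Section RowDegree.
Variables (K : fieldType) (n : nat) (a : 'rV[{poly K}]_n).

Lemma size_rV_entry_le i : (size (a ord0 i) <= rvsize a)%N.
Proof. by rewrite /rvsize (bigD1 i) //= leq_maxl. Qed.

Lemma rvdegSK : a != 0 -> (rvdeg a).+1 = rvsize a.
Proof.
case/rV_neq0_entry => i ai0; rewrite /rvdeg prednK //.
by apply: leq_trans (size_rV_entry_le i); rewrite lt0n size_poly_eq0.
Qed.

End RowDegree.

Section KmodSpan.
Variables (K : fieldType) (n l : nat) (hs : 'I_l -> 'cV[{poly K}]_n).

Lemma in_Kmod_spanZ p h : in_Kmod_span hs h -> in_Kmod_span hs (p *: h).
Proof.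
move=> [q ->]; exists (fun j => p * q j).
by rewrite scaler_sumr; apply: eq_bigr => j _; rewrite scalerA.
Qed.

Lemma in_Kmod_span_sum (I : Type) (r : seq I) (P : pred I) F :
  (forall i, P i -> in_Kmod_span hs (F i)) ->
  in_Kmod_span hs (\sum_(i <- r | P i) F i).
Proof.
apply: (big_ind (in_Kmod_span hs)).
- by exists (fun=> 0); rewrite big1 // => j _; rewrite scale0r.
- move=> _ _ [q1 ->] [q2 ->]; exists (fun j => q1 j + q2 j).
  by rewrite -big_split; apply: eq_bigr => j _; rewrite scalerDl.
Qed.

Lemma in_Kmod_span_syz a h : (forall j, in_syz a (hs j)) ->
  in_Kmod_span hs h -> in_syz a h.
Proof.
move=> hs_syz [q ->]; rewrite /in_syz mulmx_sumr big1 // => j _.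
by rewrite -scalemxAr hs_syz scaler0.
Qed.

End KmodSpan.

Theorem lemma2 (K : fieldType) (n : nat) (a : 'rV[{poly K}]_n)
  (l : nat) (hs : 'I_l -> 'cV[{poly K}]_n) :
  (1 < n)%N -> a != 0 ->
  is_K_basis_syz_d a (rvdeg a) hs ->
  forall h : 'cV[{poly K}]_n, in_syz a h <-> in_Kmod_span hs h.
Proof.
move=> _ a_neq0 [hs_syz _ hs_span] h; split; last first.
  by apply: in_Kmod_span_syz => j; case: (hs_syz j).
move=> ah0; pose f i := a ord0 i.
have [g [u [g_neq0 fE ub1]]] := poly_bezout_cofactors (rV_neq0_entry a_neq0).
pose b i := f i %/ g.
have aE : a = g *: \row_k b k.
  by apply/matrixP => x k; rewrite (ord1 x) !mxE mulrC -fE.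
have bh0 : \row_k b k *m h = 0.
  move: ah0; rewrite /in_syz aE -scalemxAl => /eqP.
  by rewrite scalemx_eq0 (negbTE g_neq0) => /eqP.
have koszul_span j i : in_Kmod_span hs (koszul_syz b j i).
  have [|c ->] := hs_span (koszul_syz b j i); last by exists (fun t => (c t)%:P).
  split; last by rewrite aE -scalemxAl koszul_syzP scaler0.
  apply: cvsize_koszul_syz => k; rewrite rvdegSK //.
  exact: leq_trans (leq_divp _ _) (size_rV_entry_le _ _).
rewrite (koszul_decomposition ub1 bh0).
by do 2!apply: in_Kmod_span_sum => ? _; apply: in_Kmod_spanZ.
Qed.
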